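(* Let $a_n$ be the number of Dyck paths of semilength $n\ge 1$ in which every descent has odd length, and let $g_0(z)=\sum_{n\ge1}a_n z^{2n}$. Then $$g_0=\frac{z\,v_1}{v_1^2-z^2}.$$ Moreover, writing $Z=z^2$, $g_0$ is a power series in $Z$ satisfying $$g_0=\frac{Z(1+g_0)}{1-Z^2(1+g_0)^2},\qquad\text{equivalently}\qquad Z^2g_0^3+2Z^2g_0^2-(1-Z-Z^2)\,g_0+Z=0,$$ so that $g_0=Z+Z^2+2Z^3+5Z^4+12Z^5+30Z^6+79Z^7+\cdots$.
   Context: A Dyck path is a finite sequence of up-steps $(1,1)$ and down-steps $(1,-1)$ starting at height $0$, never going below height $0$, and ending at height $0$; its semilength is half its number of steps. Only nonempty paths are considered. A descent is a maximal run of consecutive down-steps; its length is the number of down-steps in it. Let $v_1=v_1(z)$ denote the unique root $u$ of the cubic $$z u^3+(z^2-1)u^2-z^3u+z^2=0$$ which is a Laurent series in $z$ with $z\,v_1(z)\to1$ as $z\to0$. Its expansion begins $v_1=\frac1z-z-z^5-2z^7-4z^9-10z^{11}-\cdots$. The other two roots of the cubic tend to $0$ as $z\to0$. *)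

From mathcomp Require Import all_boot all_order all_algebra.
Set Implicit Arguments. Unset Strict Implicit. Unset Printing Implicit Defensive.
Import GRing.Theory Num.Theory.
Local Open Scope ring_scope.

(** * Dyck paths, encoded as boolean words: true = up-step, false = down-step *)

Fixpoint dyck_from (h : nat) (s : seq bool) : bool :=
  match s with
  | [::] => h == 0%N
  | true :: s' => dyck_from h.+1 s'
  | false :: s' => (0 < h)%N && dyck_from h.-1 s'
  end.

Definition is_dyck (s : seq bool) : bool := dyck_from 0 s.

Fixpoint descents_aux (cur : nat) (s : seq bool) : seq nat :=
  match s with
  | [::] => if (0 < cur)%N then [:: cur] else [::]
  | false :: s' => descents_aux cur.+1 s'
  | true :: s' => if (0 < cur)%N then cur :: descents_aux 0 s' else descents_aux 0 s'
  end.

Definition descents (s : seq bool) : seq nat := descents_aux 0 s.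

Definition a_count (n : nat) : nat :=
  #|[pred t : (n.*2).-tuple bool | is_dyck t && all odd (descents t)]|.

Definition fps := nat -> rat.

Definition fps_const (c : rat) : fps := fun n => if n == 0%N then c else 0.
Definition fps_X : fps := fun n => if n == 1%N then 1 else 0.
Definition fps_add (f g : fps) : fps := fun n => f n + g n.
Definition fps_opp (f : fps) : fps := fun n => - f n.
Definition fps_sub (f g : fps) : fps := fps_add f (fps_opp g).
Definition fps_mul (f g : fps) : fps :=
  fun n => \sum_(i < n.+1) f i * g (n - i)%N.
Definition fps_pow (f : fps) (k : nat) : fps := iter k (fps_mul f) (fps_const 1).

Declare Scope fps_scope.
Delimit Scope fps_scope with F.
Infix "+" := fps_add : fps_scope.
Infix "-" := fps_sub : fps_scope.
Infix "*" := fps_mul : fps_scope.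
Notation "f ^+ k" := (fps_pow f k) : fps_scope.

Definition g0_z : fps :=
  fun m => if odd m || (m == 0%N) then 0 else (a_count m./2)%:R.

(* the same series as a power series in Z = z^2: sum_{n>=1} a_n Z^n *)
Definition g0_Z : fps := fun n => if n == 0%N then 0 else (a_count n)%:R.

From HB Require Import structures.
From mathcomp Require Import all_boot all_order all_algebra.
From mathcomp Require Import boolp zify ring.
Import GRing.Theory.

(* Cut a nonempty Dyck path at the start of its last arch, s = x U y D with x, y
   Dyck paths: the descents of s are those of x and of y, except that the last
   descent of y grows by one.  Let G count (in Z, by semilength) the Dyck paths
   with all descents odd, O the nonempty ones among them, and H those whose
   descents are odd except the last one, which is even or absent.  The
   decomposition gives G = 1 + Z G H, H = 1 + Z G O and O = Z G H; thus g0 = O = G - 1,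
   and eliminating H yields g0 (1 - Z^2 (1 + g0)^2) = Z (1 + g0).  The series
   W = 1 - Z H satisfies W (1 + g0) = 1, hence g0 (W^2 - Z^2) = Z W and
   W^3 + (Z - 1) W^2 - Z^2 W + Z^2 = 0.  Substituting Z = z^2 turns W into the
   unique power series root w = z v1 of the rescaled cubic with w(0) = 1: the
   difference of two such roots times a series with constant term 1 vanishes. *)

Fixpoint words (m : nat) : seq (seq bool) :=
  if m is m'.+1 then map (cons true) (words m') ++ map (cons false) (words m')
  else [:: [::]].

Lemma cons_inj {T : Type} (b : T) : injective (cons b).
Proof. by move=> x y []. Qed.

Lemma mem_words m s : (s \in words m) = (size s == m).
Proof.
elim: m s => [|m IH] [|b s] //=; rewrite mem_cat.
  by apply/negbTE; rewrite negb_or; apply/andP; split; apply/negP => /mapP [].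
rewrite eqSS -IH; case: b.
  by rewrite (mem_map (cons_inj true)); apply/orb_idr => /mapP [].
by rewrite (mem_map (cons_inj false)); apply/orb_idl => /mapP [].
Qed.

Lemma uniq_words m : uniq (words m).
Proof.
elim: m => //= m IH; rewrite cat_uniq !map_inj_uniq ?IH ?andbT //=; try exact: cons_inj.
by apply/hasPn => _ /mapP [x _ ->]; apply/mapP => -[].
Qed.

Lemma count_bigE (T : Type) (a : pred T) (s : seq T) :
  count a s = \sum_(x <- s) (a x : nat).
Proof. by rewrite -sumn_count sumnE big_map. Qed.

Lemma count_words_cat (P : pred (seq bool)) a b :
  count P (words (a + b)) = \sum_(x <- words a) count (fun y => P (x ++ y)) (words b).
Proof.
elim: a P => [|a IH] P; first by rewrite big_seq1.
rewrite addSn /= count_cat !count_map big_cat !big_map /=.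
by rewrite (IH (preim (cons true) P)) (IH (preim (cons false) P)).
Qed.

Lemma card_tuple_pred m (P : pred (seq bool)) :
  #|[pred t : m.-tuple bool | P t]| = count P (words m).
Proof.
rewrite cardE /enum_mem size_filter -enumT (@eq_count _ _ (preim val P)) //.
rewrite -count_map; apply/permP/uniq_perm.
- by rewrite map_inj_uniq ?enum_uniq //; apply: val_inj.
- exact: uniq_words.
move=> s; rewrite mem_words; apply/mapP/eqP => [[t _ ->]|hs]; first exact: size_tuple.
by exists (Tuple (introT eqP hs)); rewrite ?mem_enum.
Qed.

(** * Dyck paths and their last arch *)

Fixpoint final_height (h : nat) (s : seq bool) : option nat :=
  match s with
  | [::] => Some h
  | true :: s' => final_height h.+1 s'
  | false :: s' => if h is h'.+1 then final_height h' s' else None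
  end.

Lemma dyck_fromE h s : dyck_from h s = (final_height h s == Some 0%N).
Proof. by elim: s h => [|[] s IH] [|h] //=; rewrite IH. Qed.

Lemma is_dyckE s : is_dyck s = (final_height 0 s == Some 0%N).
Proof. exact: dyck_fromE. Qed.

Lemma final_height_cat h s t :
  final_height h (s ++ t) = obind (final_height ^~ t) (final_height h s).
Proof. by elim: s h => [|[] s IH] [|h] //=. Qed.

Lemma final_heightD {h s k} d :
  final_height h s = Some k -> final_height (h + d) s = Some (k + d).
Proof.
elim: s h => [|[] s IH] h /=; first by case=> ->.
  by move/IH; rewrite addSn.
by case: h => // h /IH.
Qed.

Lemma final_height_pred {h s} : final_height h.+1 s = Some 0%N -> final_height h s = None.
Proof.
elim: s h => [|[] s IH] h //=; first by move/IH.
by case: h => // h /IH.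
Qed.

Lemma final_height_parity h s k : final_height h s = Some k -> ~~ odd (h + size s + k).
Proof.
elim: s h => [|[] s IH] h /=.
- by case=> ->; rewrite addn0 addnn odd_double.
- by move/IH; rewrite addSnnS.
- by case: h => // h /IH; rewrite !addSn /= addnS /= negbK.
Qed.

Lemma is_dyck_even {s} : is_dyck s -> ~~ odd (size s).
Proof. by rewrite is_dyckE => /eqP /final_height_parity; rewrite add0n addn0. Qed.

Definition elevate (y : seq bool) : seq bool := true :: rcons y false.

Lemma final_height_elevate h y :
  final_height 0 y = Some 0%N -> final_height h (elevate y) = Some h.
Proof.
move=> hy; rewrite /elevate /= -cats1 final_height_cat.
by have := final_heightD h.+1 hy; rewrite !add0n => ->.
Qed.

Lemma is_dyck_cat_elevate x y : is_dyck x -> is_dyck y -> is_dyck (x ++ elevate y).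
Proof.
by rewrite !is_dyckE => /eqP hx /eqP hy; rewrite final_height_cat hx; apply/eqP/final_height_elevate.
Qed.

Lemma first_passage {n s h} : size s <= n -> final_height h.+1 s = Some 0%N ->
  exists u v, [/\ s = u ++ false :: v, final_height 0 u = Some 0%N & final_height h v = Some 0%N].
Proof.
elim: n s h => [|n IH] [|[] s] h //= hs; last by exists [::], s.
move=> /(IH s h.+1 hs) [u [v [es hu hv]]]; rewrite {s}es in hs *.
have /(IH v h) [|u' [v' [-> hu' hv']]] // : size v <= n.
  by move: hs; rewrite size_cat /=; lia.
exists (true :: u ++ false :: u'), v'; split => //=; first by rewrite -catA.
by rewrite final_height_cat (final_heightD 1 hu).
Qed.

Lemma last_arch_decomp {s} : is_dyck s -> s != [::] ->
  exists x y, [/\ s = x ++ elevate y, is_dyck x & is_dyck y].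
Proof.
rewrite is_dyckE; move: {2}(size s) (leqnn (size s)) => n.
elim: n s => [|n IH] [|[] s] //= hs /eqP hw _.
have [u [[|b v] [es hu hv]]] := first_passage (leqnn (size s)) hw; rewrite {s hw}es in hs *.
  by exists [::], u; rewrite /elevate cats1 !is_dyckE hu.
have /IH /(_ (introT eqP hv) isT) [x [y [e hx hy]]] : size (b :: v) <= n.
  by move: hs; rewrite size_cat /=; lia.
exists (true :: u ++ false :: x), y; split => //; first by rewrite e /= -catA.
by move: hx; rewrite !is_dyckE /= final_height_cat (final_heightD 1 hu).
Qed.

Lemma last_arch_uniq {x1 y1 x2 y2} : x1 ++ elevate y1 = x2 ++ elevate y2 ->
  is_dyck x1 -> is_dyck x2 -> is_dyck y1 -> is_dyck y2 -> x1 = x2.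
Proof.
wlog le12 : x1 y1 x2 y2 / size x1 <= size x2.
  move=> wlog e dx1 dx2 dy1 dy2; case: (leqP (size x1) (size x2)) => [le|/ltnW le].
    exact: (wlog x1 y1 x2 y2).
  exact/esym/(wlog x2 y2 x1 y1).
move=> e dx1 dx2 dy1 _; case: ltngtP le12 => // [lt12 _|eq12 _]; last first.
  by move/(congr1 (take (size x1))): e; rewrite take_size_cat // eq12 take_size_cat.
(* Otherwise x2 = x1 ++ true :: w, and the first return of y1 to height 0
   would happen inside w, before its end. *)
have ex1 : take (size x1) x2 = x1.
  by move/(congr1 (take (size x1))): e; rewrite take_size_cat // take_cat lt12.
have ex2 : x2 = x1 ++ drop (size x1) x2 by rewrite -{1}(cat_take_drop (size x1) x2) ex1.
have w_gt0 : 0 < size (drop (size x1) x2) by rewrite size_drop subn_gt0.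
move/(congr1 (drop (size x1))): e; rewrite drop_size_cat // drop_cat lt12.
move: ex2 w_gt0 dx2; case: (drop (size x1) x2) => [|b w] // -> _ dx2 [eb ey]; subst b.
move: dx1 dy1 dx2; rewrite !is_dyckE => /eqP dx1 /eqP dy1.
rewrite final_height_cat dx1 /= => /eqP hw; move: dy1.
rewrite (rcons_injl false (_ : rcons y1 false = rcons (w ++ true :: y2) false)).
  by rewrite final_height_cat (final_height_pred hw).
by rewrite ey rcons_cat.
Qed.

Definition odd_or0 (c : nat) : bool := (c == 0%N) || odd c.

Fixpoint descents_ok (p : pred nat) (c : nat) (s : seq bool) : bool :=
  match s with
  | [::] => p c
  | false :: s' => descents_ok p c.+1 s'
  | true :: s' => odd_or0 c && descents_ok p 0 s'
  end.

Lemma all_odd_descents_aux c s : all odd (descents_aux c s) = descents_ok odd_or0 c s.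
Proof.
by elim: s c => [|[] s IH] [|c] //=; rewrite ?IH ?andbT.
Qed.

Lemma eq_descents_ok p q c s : p =1 q -> descents_ok p c s = descents_ok q c s.
Proof. by move=> e; elim: s c => [|[] s IH] c //=; rewrite IH. Qed.

Lemma descents_ok_cat_up p c s t :
  descents_ok p c (s ++ true :: t) = descents_ok odd_or0 c s && descents_ok p 0 t.
Proof. by elim: s c => [|[] s IH] c //=; rewrite IH // andbA. Qed.

Lemma descents_ok_rcons_down p c s :
  descents_ok p c (rcons s false) = descents_ok (fun c => p c.+1) c s.
Proof. by elim: s c => [|[] s IH] c //=; rewrite IH. Qed.

Lemma descents_ok_cat_elevate p x y :
  descents_ok p 0 (x ++ elevate y) =
  descents_ok odd_or0 0 x && descents_ok (fun c => p c.+1) 0 y.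
Proof. by rewrite descents_ok_cat_up descents_ok_rcons_down. Qed.

Definition dyckG (s : seq bool) : bool := is_dyck s && descents_ok odd_or0 0 s.
Definition dyckH (s : seq bool) : bool := is_dyck s && descents_ok (fun c => ~~ odd c) 0 s.
Definition dyckO (s : seq bool) : bool := is_dyck s && descents_ok odd 0 s.

Lemma dyckG_elevate x y : is_dyck x -> is_dyck y ->
  dyckG (x ++ elevate y) = dyckG x && dyckH y.
Proof.
move=> dx dy; rewrite /dyckG /dyckH is_dyck_cat_elevate // dx dy descents_ok_cat_elevate /=.
by congr (_ && _); apply: eq_descents_ok.
Qed.

Lemma dyckH_elevate x y : is_dyck x -> is_dyck y ->
  dyckH (x ++ elevate y) = dyckG x && dyckO y.
Proof.
move=> dx dy; rewrite /dyckG /dyckO /dyckH is_dyck_cat_elevate // dx dy descents_ok_cat_elevate /=.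
by congr (_ && _); apply: eq_descents_ok => c /=; rewrite negbK.
Qed.

Lemma dyckO_elevate x y : is_dyck x -> is_dyck y ->
  dyckO (x ++ elevate y) = dyckG x && dyckH y.
Proof.
move=> dx dy; rewrite /dyckG /dyckO /dyckH is_dyck_cat_elevate // dx dy descents_ok_cat_elevate /=.
by congr (_ && _); apply: eq_descents_ok.
Qed.

Definition elevated (B : pred (seq bool)) (t : seq bool) : bool :=
  if t is true :: t' then (if rev t' is false :: r then B (rev r) else false) else false.

Lemma elevated_elevate B y : elevated B (elevate y) = B y.
Proof. by rewrite /= rev_rcons revK. Qed.

Lemma elevatedP B t : elevated B t -> exists2 y, t = elevate y & B y.
Proof.
case: t => [|[] t] //=; case E: (rev t) => [|[] r] // hB; exists (rev r) => //.
by rewrite /elevate -rev_cons -E revK.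
Qed.

Lemma count_elevated B m : count (elevated B) (words m.+2) = count B (words m).
Proof.
rewrite -[m.+2](addn1 (1 + m)) -addnA count_words_cat /= !big_cons big_nil /=.
rewrite !count_words_cat [X in (_ + (X + _))%N]big1 // !addn0 count_bigE.
by apply: eq_bigr => x _ /=; rewrite !cats1 !rev_rcons revK addn0.
Qed.

(** * Counting by the last arch *)

Section LastArchConvolution.

Variables A B P : pred (seq bool).
Hypothesis dyckA : forall x, A x -> is_dyck x.
Hypothesis dyckB : forall y, B y -> is_dyck y.
Hypothesis P_elevate : forall x y, is_dyck x -> is_dyck y -> P (x ++ elevate y) = A x && B y.
Hypothesis dyckP : forall s, P s -> is_dyck s.

Lemma last_arch_sum n s : size s = n.+1.*2 ->
  P s = \sum_(k < n.+1) (A (take k.*2 s) && elevated B (drop k.*2 s)) :> nat.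
Proof.
move=> size_s.
have split_k k : A (take k.*2 s) && elevated B (drop k.*2 s) ->
    exists2 y, s = take k.*2 s ++ elevate y & [/\ is_dyck (take k.*2 s), is_dyck y & P s].
  case/andP=> hA /elevatedP [y ey hB]; exists y; first by rewrite -ey cat_take_drop.
  have [dx dy] := (dyckA _ hA, dyckB _ hB); split => //.
  by rewrite -[s](cat_take_drop k.*2) ey P_elevate // hA hB.
case Ps: (P s); last first.
  by rewrite big1 // => k _; apply/eqP; rewrite eqb0; apply/negP => /split_k [y _ [_ _]]; rewrite Ps.
have [|x [y [es dx dy]]] := last_arch_decomp (dyckP _ Ps); first by rewrite -size_eq0 size_s.
have size_x : size x = (size x)./2.*2.
  by rewrite -[LHS](odd_double_half (size x)) (negbTE (is_dyck_even dx)).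
have lt_xn : (size x)./2 < n.+1.
  by rewrite -ltn_double -size_x -ltnS -ltnS -size_s es size_cat /= size_rcons; lia.
rewrite (bigD1 (Ordinal lt_xn)) //= big1 ?addn0.
  by rewrite -size_x es take_size_cat // drop_size_cat // elevated_elevate -P_elevate // -es Ps.
move=> k /eqP nk; apply/eqP; rewrite eqb0; apply/negP => /split_k [y' e' [dx' dy' _]].
apply: nk; apply: val_inj => /=; apply: double_inj; rewrite -size_x.
have ex : take k.*2 s = x.
  by apply: (last_arch_uniq _ dx' dx dy' dy); rewrite -e' -es.
have lt_ks : k.*2 < size s.
  rewrite ltnNge; apply/negP => le_sk; move/(congr1 size): ex.
  by rewrite take_oversize // es size_cat /= size_rcons; lia.
by rewrite -(size_takel (ltnW lt_ks)) ex.
Qed.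

Lemma count_last_arch n : count P (words n.+1.*2) =
  \sum_(k < n.+1) count A (words k.*2) * count B (words (n - k).*2).
Proof.
pose Q k s := A (take k.*2 s) && elevated B (drop k.*2 s).
transitivity (\sum_(k < n.+1) count (Q k) (words n.+1.*2)).
  rewrite count_bigE big_seq.
  under [RHS]eq_bigr do rewrite count_bigE big_seq.
  rewrite -exchange_big; apply: eq_bigr => s.
  by rewrite mem_words => /eqP /last_arch_sum.
apply: eq_bigr => k _.
have -> : n.+1.*2 = (k.*2 + (n - k).*2.+2)%N by rewrite -doubleS -doubleD addnS subnKC // -ltnS.
rewrite count_words_cat count_bigE big_distrl /= big_seq [RHS]big_seq.
apply: eq_bigr => x; rewrite mem_words => /eqP size_x.
rewrite (@eq_count _ _ (fun y => A x && elevated B y)); last first.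
  by move=> y; rewrite /Q -size_x take_size_cat // drop_size_cat.
by case: (A x); rewrite ?mul1n ?mul0n ?count_pred0 // count_elevated.
Qed.

End LastArchConvolution.

Arguments count_last_arch {A B P}.

Lemma dyckG_dyck s : dyckG s -> is_dyck s. Proof. by case/andP. Qed.
Lemma dyckH_dyck s : dyckH s -> is_dyck s. Proof. by case/andP. Qed.
Lemma dyckO_dyck s : dyckO s -> is_dyck s. Proof. by case/andP. Qed.

Definition cntG n := count dyckG (words n.*2).
Definition cntH n := count dyckH (words n.*2).
Definition cntO n := count dyckO (words n.*2).

Lemma cntG_rec n : cntG n.+1 = \sum_(k < n.+1) cntG k * cntH (n - k).
Proof. exact: (count_last_arch dyckG_dyck dyckH_dyck dyckG_elevate dyckG_dyck). Qed.

Lemma cntH_rec n : cntH n.+1 = \sum_(k < n.+1) cntG k * cntO (n - k).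
Proof. exact: (count_last_arch dyckG_dyck dyckO_dyck dyckH_elevate dyckH_dyck). Qed.

Lemma cntO_rec n : cntO n.+1 = \sum_(k < n.+1) cntG k * cntH (n - k).
Proof. exact: (count_last_arch dyckG_dyck dyckH_dyck dyckO_elevate dyckO_dyck). Qed.

Lemma a_countE n : a_count n = cntG n.
Proof.
rewrite /a_count (card_tuple_pred _ (fun s => is_dyck s && all odd (descents s))).
by apply: eq_count => s; rewrite /dyckG /descents all_odd_descents_aux.
Qed.

Lemma cntO_first_values :
  [seq cntO n | n <- iota 0 8] = [:: 0; 1; 1; 2; 5; 12; 30; 79]%N.
Proof. by vm_compute. Qed.

(** * Formal power series *)

Local Open Scope ring_scope.

HB.instance Definition _ := gen_eqMixin fps.
HB.instance Definition _ := gen_choiceMixin fps.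

Lemma fps_addA : associative fps_add.
Proof. by move=> f g h; apply: funext => n; rewrite /fps_add addrA. Qed.

Lemma fps_addC : commutative fps_add.
Proof. by move=> f g; apply: funext => n; rewrite /fps_add addrC. Qed.

Lemma fps_add0 : left_id (fps_const 0) fps_add.
Proof. by move=> f; apply: funext => n; rewrite /fps_add /fps_const if_same add0r. Qed.

Lemma fps_addN : left_inverse (fps_const 0) fps_opp fps_add.
Proof. by move=> f; apply: funext => n; rewrite /fps_add /fps_opp /fps_const addNr if_same. Qed.

HB.instance Definition _ := GRing.isZmodule.Build fps fps_addA fps_addC fps_add0 fps_addN.

(* Every coefficient identity of a product only involves finitely many
   coefficients, so the ring axioms for [fps_mul] are inherited from {poly rat}. *)
Definition fps_trunc n (f : fps) : {poly rat} := \poly_(i < n.+1) f i.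

Definition fps_agree n (f : fps) (p : {poly rat}) := forall i, (i <= n)%N -> f i = p`_i.

Lemma fps_agree_trunc n f : fps_agree n f (fps_trunc n f).
Proof. by move=> i le_in; rewrite coef_poly ltnS le_in. Qed.

Lemma fps_agree_const n c : fps_agree n (fps_const c) c%:P.
Proof. by move=> i _; rewrite coefC. Qed.

Lemma fps_agree_add n f g p q :
  fps_agree n f p -> fps_agree n g q -> fps_agree n (fps_add f g) (p + q).
Proof. by move=> hf hg i le_in; rewrite coefD /fps_add hf ?hg. Qed.

Lemma fps_agree_mul n f g p q :
  fps_agree n f p -> fps_agree n g q -> fps_agree n (fps_mul f g) (p * q).
Proof.
move=> hf hg i le_in; rewrite coefM; apply: eq_bigr => j _.
rewrite hf ?hg ?(leq_trans (leq_subr _ _) le_in) //.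
by apply: leq_trans le_in; rewrite -ltnS.
Qed.

Lemma fps_agree_eq n f g p i :
  fps_agree n f p -> fps_agree n g p -> (i <= n)%N -> f i = g i.
Proof. by move=> hf hg le_in; rewrite hf // hg. Qed.

Ltac fps_agree_poly :=
  do ![apply: fps_agree_mul | apply: fps_agree_add | apply: fps_agree_trunc
      | apply: fps_agree_const].

Lemma fps_mulA : associative fps_mul.
Proof.
move=> f g h; apply: funext => n.
apply: (@fps_agree_eq n _ _ (fps_trunc n f * fps_trunc n g * fps_trunc n h)) => //.
  by rewrite -mulrA; fps_agree_poly.
by fps_agree_poly.
Qed.

Lemma fps_mulC : commutative fps_mul.
Proof.
move=> f g; apply: funext => n.
apply: (@fps_agree_eq n _ _ (fps_trunc n f * fps_trunc n g)) => //.
  by fps_agree_poly.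
by rewrite mulrC; fps_agree_poly.
Qed.

Lemma fps_mul1 : left_id (fps_const 1) fps_mul.
Proof.
move=> f; apply: funext => n; apply: (@fps_agree_eq n _ _ (1%:P * fps_trunc n f)) => //.
  by fps_agree_poly.
by rewrite mul1r; fps_agree_poly.
Qed.

Lemma fps_mulDl : left_distributive fps_mul fps_add.
Proof.
move=> f g h; apply: funext => n.
apply: (@fps_agree_eq n _ _ ((fps_trunc n f + fps_trunc n g) * fps_trunc n h)) => //.
  by fps_agree_poly.
by rewrite mulrDl; fps_agree_poly.
Qed.

Lemma fps_const1_neq0 : fps_const 1 != fps_const 0.
Proof. by apply/eqP => /(congr1 (fun f : fps => f 0%N)) /eqP; rewrite oner_eq0. Qed.

HB.instance Definition _ :=
  GRing.Zmodule_isComNzRing.Build fps fps_mulA fps_mulC fps_mul1 fps_mulDl fps_const1_neq0.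

Lemma fps_addE f g : fps_add f g = f + g. Proof. by []. Qed.
Lemma fps_subE f g : fps_sub f g = f - g. Proof. by []. Qed.
Lemma fps_mulE f g : fps_mul f g = f * g. Proof. by []. Qed.
Lemma fps_powE f k : fps_pow f k = f ^+ k.
Proof. by elim: k => [|k IH] //=; rewrite exprS -IH. Qed.
Lemma fps_const0 : fps_const 0 = 0. Proof. by []. Qed.
Lemma fps_const1 : fps_const 1 = 1. Proof. by []. Qed.

Lemma fps_const_natE n : fps_const n%:R = n%:R.
Proof.
elim: n => [|n IH] //; rewrite !mulrS -IH -fps_const1 -fps_addE.
by apply: funext => i; rewrite /fps_add /fps_const; case: (i == 0%N); rewrite ?addr0.
Qed.

Definition fps_ringE :=
  (fps_subE, fps_addE, fps_mulE, fps_powE, fps_const0, fps_const1).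

Definition coef0 (f : fps) : rat := f 0%N.

Lemma coef0_is_zmod_morphism : zmod_morphism coef0.
Proof. by move=> f g. Qed.

Lemma coef0_is_monoid_morphism : monoid_morphism coef0.
Proof. by split=> // f g; rewrite /coef0 -fps_mulE /fps_mul big_ord1. Qed.

HB.instance Definition _ := GRing.isZmodMorphism.Build fps rat coef0 coef0_is_zmod_morphism.
HB.instance Definition _ := GRing.isMonoidMorphism.Build fps rat coef0 coef0_is_monoid_morphism.

Lemma fps_mulIf {b : fps} : b 0%N != 0 -> injective ( *%R^~ b).
Proof.
move=> b0; suff mul_eq0 a : a * b = 0 -> a = 0.
  by move=> f g /eqP; rewrite -subr_eq0 -mulrBl => /eqP /mul_eq0 /eqP; rewrite subr_eq0 => /eqP.
move=> ab0; apply: funext => n; rewrite -fps_const0 /fps_const if_same.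
elim/ltn_ind: n => n IH; move/(congr1 (fun f : fps => f n)): ab0.
rewrite -fps_mulE /fps_mul big_ord_recr /= subnn big1 => [|i _]; last by rewrite IH ?mul0r.
by rewrite add0r -fps_const0 /fps_const if_same => /eqP; rewrite mulf_eq0 (negbTE b0) orbF => /eqP.
Qed.

Lemma coef_Xmul f n : (fps_X * f) n = if n is n'.+1 then f n' else 0.
Proof.
rewrite -fps_mulE /fps_mul big_ord_recl /fps_X /= mul0r add0r.
case: n => [|n]; first by rewrite big_ord0.
by rewrite big_ord_recl /= mul1r subn1 big1 ?addr0 // => i _; rewrite mul0r.
Qed.

Definition nat_fps (a : nat -> nat) : fps := fun n => (a n)%:R.

Lemma nat_fps_conv {a b c : nat -> nat} :
  (forall n, a n.+1 = \sum_(k < n.+1) b k * c (n - k))%N ->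
  nat_fps a = (a 0%N)%:R + fps_X * (nat_fps b * nat_fps c).
Proof.
move=> rec; apply: funext => n; rewrite -fps_const_natE -fps_addE /fps_add coef_Xmul /fps_const.
case: n => [|n]; first by rewrite addr0.
by rewrite add0r /nat_fps rec natr_sum; apply: eq_bigr => k _; rewrite natrM.
Qed.

Definition spread (f : fps) : fps := fun m => if odd m then 0 else f m./2.

Lemma fps_agree_spread n f p :
  fps_agree n f p -> fps_agree n.*2 (spread f) (p \Po 'X^2).
Proof.
move=> hf i le_i; rewrite coef_comp_poly_Xn // dvdn2 /spread.
by case: (odd i) => //=; rewrite divn2 hf // -(doubleK n) half_leq.
Qed.

Lemma spread_is_zmod_morphism : zmod_morphism spread.
Proof.
by move=> f g; apply: funext => m; rewrite /spread -!fps_subE /fps_sub /fps_add /fps_opp;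
  case: (odd m); rewrite ?subr0.
Qed.

Lemma spread_is_monoid_morphism : monoid_morphism spread.
Proof.
split.
  apply: funext => -[|[|m]] //; rewrite -fps_const1 /spread /fps_const /=.
  by case: ifP => // _; rewrite -[m.+2]odd_double_half /=; case: (odd m).
move=> f g; apply: funext => m.
have le_m : (m <= m.*2)%N by rewrite -addnn leq_addr.
apply: (@fps_agree_eq m.*2 _ _ ((fps_trunc m f * fps_trunc m g) \Po 'X^2)) => //.
  by apply: fps_agree_spread; apply: fps_agree_mul; apply: fps_agree_trunc.
by rewrite comp_polyM; apply: fps_agree_mul; apply: fps_agree_spread; apply: fps_agree_trunc.
Qed.

HB.instance Definition _ := GRing.isZmodMorphism.Build fps fps spread spread_is_zmod_morphism.
HB.instance Definition _ := GRing.isMonoidMorphism.Build fps fps spread spread_is_monoid_morphism.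

Lemma spread_X : spread fps_X = fps_X ^+ 2.
Proof.
apply: funext => m; rewrite expr2 coef_Xmul /spread /fps_X.
by case: m => [|[|[|[|m]]]] //=; case: ifP.
Qed.

Lemma cubic_root_uniq {w u : fps} : w 0%N = 1 -> u 0%N = 1 ->
  w ^+ 3 + (fps_X ^+ 2 - 1) * w ^+ 2 - fps_X ^+ 4 * w + fps_X ^+ 4 = 0 ->
  u ^+ 3 + (fps_X ^+ 2 - 1) * u ^+ 2 - fps_X ^+ 4 * u + fps_X ^+ 4 = 0 -> w = u.
Proof.
move=> w0 u0 pw pu.
pose Q := w ^+ 2 + w * u + u ^+ 2 + (fps_X ^+ 2 - 1) * (w + u) - fps_X ^+ 4.
have Q0 : Q 0%N != 0.
  have -> : Q 0%N = coef0 Q by [].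
  rewrite !(rmorphB, rmorphD, rmorphM, rmorphXn, rmorph1) /= /coef0 w0 u0.
  by rewrite (_ : _ - _ = 1) ?oner_neq0 //; ring.
apply/eqP; rewrite -subr_eq0; apply/eqP; apply: (fps_mulIf Q0); rewrite mul0r.
transitivity ((w ^+ 3 + (fps_X ^+ 2 - 1) * w ^+ 2 - fps_X ^+ 4 * w + fps_X ^+ 4)
              - (u ^+ 3 + (fps_X ^+ 2 - 1) * u ^+ 2 - fps_X ^+ 4 * u + fps_X ^+ 4)).
  by rewrite /Q; ring.
by rewrite pw pu subrr.
Qed.

Lemma rational_cubic (R : comPzRingType) (g x : R) :
  g * (1 - x ^+ 2 * (1 + g) ^+ 2) = x * (1 + g) ->
  x ^+ 2 * g ^+ 3 + 2 * x ^+ 2 * g ^+ 2 - (1 - x - x ^+ 2) * g + x = 0.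
Proof.
move=> e; transitivity (x * (1 + g) - g * (1 - x ^+ 2 * (1 + g) ^+ 2)); first ring.
by rewrite e subrr.
Qed.

Definition gfG : fps := nat_fps cntG.
Definition gfH : fps := nat_fps cntH.
Definition gfO : fps := nat_fps cntO.

Lemma gfG_eq : gfG = 1 + fps_X * (gfG * gfH).
Proof. exact: nat_fps_conv cntG_rec. Qed.

Lemma gfH_eq : gfH = 1 + fps_X * (gfG * gfO).
Proof. exact: nat_fps_conv cntH_rec. Qed.

Lemma gfO_eq : gfO = fps_X * (gfG * gfH).
Proof. by rewrite [LHS](nat_fps_conv cntO_rec) add0r. Qed.

Lemma gfG_eq1O : gfG = 1 + gfO.
Proof. by rewrite {1}gfG_eq -gfO_eq. Qed.

Lemma g0_ZE : g0_Z = gfO.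
Proof. by apply: funext => -[|n] //; rewrite /g0_Z /gfO /nat_fps a_countE cntG_rec -cntO_rec. Qed.

Lemma g0_zE : g0_z = spread gfO.
Proof.
apply: funext => m; rewrite /g0_z /spread -g0_ZE /g0_Z.
case om: (odd m) => //=; case: eqP => [-> //|m_neq0].
by case: eqP => // m0; case: m_neq0; rewrite -[m]odd_double_half om m0.
Qed.

Lemma gfO_rational : gfO * (1 - fps_X ^+ 2 * (1 + gfO) ^+ 2) = fps_X * (1 + gfO).
Proof.
rewrite -gfG_eq1O; apply/eqP; rewrite -subr_eq0; apply/eqP.
transitivity (gfO - fps_X * (gfG * gfH) + fps_X * gfG * (gfH - (1 + fps_X * (gfG * gfO)))).
  ring.
by rewrite -gfO_eq -gfH_eq !subrr mulr0 addr0.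
Qed.

(* W = 1 - Z H corresponds to z v1(z) after substituting Z = z^2. *)
Definition gfW : fps := 1 - fps_X * gfH.

Lemma gfW_mul_gfG : gfW * gfG = 1.
Proof. by rewrite /gfW mulrBl mul1r {1}gfG_eq; ring. Qed.

Lemma gfO_mul_gfW : gfO * (gfW ^+ 2 - fps_X ^+ 2) = fps_X * gfW.
Proof.
have WG2 : gfW ^+ 2 * gfG ^+ 2 = 1 by rewrite -exprMn gfW_mul_gfG expr1n.
transitivity (gfW ^+ 2 * (gfO * (1 - fps_X ^+ 2 * gfG ^+ 2))
              + gfO * fps_X ^+ 2 * (gfW ^+ 2 * gfG ^+ 2 - 1)).
  ring.
rewrite WG2 subrr mulr0 addr0 gfG_eq1O gfO_rational -gfG_eq1O.
by rewrite -[RHS]mulr1 -gfW_mul_gfG; ring.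
Qed.

Lemma gfW_cubic : gfW ^+ 3 + (fps_X - 1) * gfW ^+ 2 - fps_X ^+ 2 * gfW + fps_X ^+ 2 = 0.
Proof.
transitivity ((gfW * gfG - 1) * (gfW ^+ 2 - fps_X ^+ 2)
              - gfW * (gfO * (gfW ^+ 2 - fps_X ^+ 2) - fps_X * gfW)).
  by rewrite gfG_eq1O; ring.
by rewrite gfW_mul_gfG gfO_mul_gfW !subrr mul0r mulr0 subrr.
Qed.

Lemma spread_gfW0 : spread gfW 0%N = 1.
Proof.
have -> : spread gfW 0%N = coef0 gfW by [].
by rewrite /gfW rmorphB rmorph1 rmorphM /= mul0r subr0.
Qed.

Lemma spread_gfW_cubic : spread gfW ^+ 3 + (fps_X ^+ 2 - 1) * spread gfW ^+ 2
  - fps_X ^+ 4 * spread gfW + fps_X ^+ 4 = 0.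
Proof.
have := congr1 spread gfW_cubic; move: gfW => W.
by rewrite !(rmorphD, rmorphB, rmorphN, rmorphM, rmorphXn, rmorph1, rmorph0) /= spread_X => <-; ring.
Qed.

Lemma spread_gfO_mul_gfW :
  spread gfO * (spread gfW ^+ 2 - fps_X ^+ 4) = fps_X ^+ 2 * spread gfW.
Proof.
have := congr1 spread gfO_mul_gfW; move: gfO gfW => O W.
by rewrite !(rmorphB, rmorphM, rmorphXn) /= spread_X => e; rewrite -e; ring.
Qed.

Theorem mainTheorem1 :
  (exists w : fps, w 0%N = 1 /\
     (w ^+ 3 + (fps_X ^+ 2 - (fps_const 1)) * w ^+ 2 - fps_X ^+ 4 * w + fps_X ^+ 4)%F
       = (fps_const 0)%F) /\
  (forall w : fps, w 0%N = 1 ->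
     (w ^+ 3 + (fps_X ^+ 2 - (fps_const 1)) * w ^+ 2 - fps_X ^+ 4 * w + fps_X ^+ 4)%F
       = (fps_const 0)%F ->
     (g0_z * (w ^+ 2 - fps_X ^+ 4))%F = (fps_X ^+ 2 * w)%F) /\
  (g0_Z * ((fps_const 1) - fps_X ^+ 2 * ((fps_const 1) + g0_Z) ^+ 2))%F
     = (fps_X * ((fps_const 1) + g0_Z))%F /\
  (fps_X ^+ 2 * g0_Z ^+ 3 + (fps_const 2) * fps_X ^+ 2 * g0_Z ^+ 2
     - ((fps_const 1) - fps_X - fps_X ^+ 2) * g0_Z + fps_X)%F = (fps_const 0)%F /\
  [seq g0_Z n | n <- iota 0 8] = [:: 0; 1; 1; 2; 5; 12; 30; 79].
Proof.
split.
  by exists (spread gfW); rewrite !fps_ringE; split; [exact: spread_gfW0 | exact: spread_gfW_cubic].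
split.
  move=> w w0; rewrite !fps_ringE => pw.
  by rewrite (cubic_root_uniq w0 spread_gfW0 pw spread_gfW_cubic) g0_zE spread_gfO_mul_gfW.
rewrite !fps_ringE fps_const_natE g0_ZE.
split; first exact: gfO_rational.
split; first exact: rational_cubic gfO_rational.
transitivity [seq (k%:R : rat) | k <- [seq cntO n | n <- iota 0 8]]; first by rewrite -map_comp.
by rewrite cntO_first_values.
Qed.
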